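(* Let $E\to X$ be a rank $n$ vector bundle on a nonsingular variety $X$ over an algebraically closed field, let $\nu=(\nu_1>\cdots>\nu_k>0)$ be a strict partition with $k\le n$, and set $\lambda=\nu0^{n-k}=(\nu_1,\dots,\nu_k,0,\dots,0)$. Then $$P_\lambda(E;t)=(\tau_E^k)_*\Bigl(x_1^{\nu_1}\cdots x_k^{\nu_k}\prod_{1\le i<j\le n,\ i\le k}(x_i-tx_j)\Bigr).$$
   Context: $t$ is an indeterminate, push-forwards act coefficientwise in $t$. For a sequence $\lambda$ of $n$ nonnegative integers, $R_\lambda(E;t)=(\tau_E)_*\bigl(x_1^{\lambda_1}\cdots x_n^{\lambda_n}\prod_{i<j}(x_i-tx_j)\bigr)$, where $\tau_E:Fl(E)\to X$ is the complete flag bundle of quotients of ranks $n,\dots,1$ and $(\tau_E)_*f(x)=\sum_{w\in S_n}w\bigl(f(y)/\prod_{i<j}(y_i-y_j)\bigr)$ evaluated at the Chern roots of $E$. $v_m(t)=\prod_{i=1}^m\frac{1-t^i}{1-t}$, $v_\lambda(t)=\prod_iv_{m_i}(t)$ where $m_i$ are the sizes of the level sets of $\lambda$, and $P_\lambda(E;t)=R_\lambda(E;t)/v_\lambda(t)$. $\tau_E^k:Fl^k(E)\to X$ is the flag bundle parametrizing flags of quotients of $E$ of ranks $k,k-1,\dots,1$, and for a polynomial $f$ symmetric in $y_{k+1},\dots,y_n$, $(\tau^k_E)_*f(x)=\sum_{w\in S_n/S_{n-k}}w\bigl(f(y)/\prod_{i<j,\,i\le k}(y_i-y_j)\bigr)$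 evaluated at the Chern roots of $E$. *)

(* Chern-root (splitting principle) rendering of push-forwards. *)
From HB Require Import structures.
From mathcomp Require Import all_boot all_order all_algebra all_fingroup.
Set Implicit Arguments. Unset Strict Implicit. Unset Printing Implicit Defensive.
Import Order.TTheory GRing.Theory Num.Theory.
Local Open Scope ring_scope.

(* Variables are indexed 0..n-1 (paper's x_1..x_n). A "polynomial" f is given
   as a function of the n variables; the Chern roots are y : 'I_n -> F. *)

Definition permute_vars (F : fieldType) (n : nat) (w : 'S_n) (y : 'I_n -> F) :
  'I_n -> F := fun i => y (w i).

(* full flag bundle push-forward:
   sum_{w in S_n} w( f(y) / prod_{i<j} (y_i - y_j) ) *)
Definition pushFull (F : fieldType) (n : nat) (f : ('I_n -> F) -> F)
  (y : 'I_n -> F) : F :=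
  \sum_(w : 'S_n)
    (let z := permute_vars w y in
     f z / \prod_(i : 'I_n) \prod_(j : 'I_n | (i < j)%N) (z i - z j)).

(* partial flag bundle Fl^k push-forward: sum over S_n / S_{n-k}, using the
   canonical coset representatives w (increasing on positions k..n-1) of the
   left cosets w S_{n-k}, S_{n-k} permuting the last n-k variables. *)
Definition pushPartial (F : fieldType) (n k : nat) (f : ('I_n -> F) -> F)
  (y : 'I_n -> F) : F :=
  \sum_(w : 'S_n | [forall i : 'I_n, forall j : 'I_n,
                      ((k <= i)%N && (i < j)%N) ==> (w i < w j)%N])
    (let z := permute_vars w y in
     f z / \prod_(i : 'I_n | (i < k)%N) \prod_(j : 'I_n | (i < j)%N) (z i - z j)).

Definition Rlam (F : fieldType) (n : nat) (lam : seq nat) (t : F)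
  (y : 'I_n -> F) : F :=
  pushFull (fun x : 'I_n -> F =>
     (\prod_(i : 'I_n) x i ^+ nth 0%N lam i) *
     \prod_(i : 'I_n) \prod_(j : 'I_n | (i < j)%N) (x i - t * x j)) y.

(* v_m(t) = prod_{i=1}^m (1-t^i)/(1-t) = prod_{i=1}^m (1 + t + ... + t^{i-1}) *)
Definition vm (F : fieldType) (m : nat) (t : F) : F :=
  \prod_(1 <= i < m.+1) \sum_(j < i) t ^+ j.

Definition vlam (F : fieldType) (lam : seq nat) (t : F) : F :=
  \prod_(c <- undup lam) vm (count_mem c lam) t.

Definition Plam (F : fieldType) (n : nat) (lam : seq nat) (t : F)
  (y : 'I_n -> F) : F :=
  Rlam lam t y / vlam lam t.

(* Group the sum over S_n defining R_lambda by the left cosets of the subgroup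
   S_{n-k} permuting the last n-k variables, with the permutations increasing on
   positions k+1..n (those indexing the partial flag push-forward) as
   representatives.  For lambda = nu 0^{n-k}, the summand factors as the
   partial-flag summand, which is S_{n-k}-invariant, times the Hall-Littlewood
   kernel prod_{k<i<j} (x_i - t x_j)/(x_i - x_j) of the last n-k variables.  The
   symmetrization of that kernel over S_{n-k} is the constant v_{n-k}(t), which
   is v_lambda(t) because the parts of nu are distinct and positive.  The
   constant is obtained by induction on the number of variables: fixing the image
   of the first one reduces it to the identity
     sum_r prod_{q <> r} (z_r - t z_q)/(z_r - z_q) = 1 + t + ... + t^{m-1},
   which follows from the partial fraction expansion of
   prod_q (X - t z_q)/(X - z_q). *)

From HB Require Import structures.
From mathcomp Require Import all_boot all_order all_algebra all_fingroup.
From mathcomp Require Import ring zify.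
From Stdlib Require Import FunctionalExtensionality.
Set Implicit Arguments. Unset Strict Implicit. Unset Printing Implicit Defensive.
Import GRing.Theory.
Local Open Scope ring_scope.

Lemma setD1_ind (T : finType) (Q : {set T} -> Prop) : Q set0 ->
    (forall (P : {set T}) a, a \in P -> (forall b, b \in P -> Q (P :\ b)) -> Q P) ->
  forall P, Q P.
Proof.
move=> Q0 QD1 P; move: {2}#|P| (erefl #|P|) => m; elim: m P => [|m IH] P cardP.
  by move/eqP: cardP; rewrite cards_eq0 => /eqP ->.
have [a aP] : exists a, a \in P by apply/card_gt0P; rewrite cardP.
apply: (QD1 _ a aP) => b bP; apply: IH.
by move: cardP; rewrite (cardsD1 b) bP => -[].
Qed.

Section HallLittlewoodRatios.
Variables (F : fieldType) (n : nat) (t : F).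
Implicit Types (z : 'I_n -> F) (P : {set 'I_n}) (a b q r : 'I_n).

Definition hl_ratio z a b := (z a - t * z b) / (z a - z b).
Definition hl_coef z P r := \prod_(q in P :\ r) hl_ratio z r q.

Variable z : 'I_n -> F.
Hypothesis z_inj : injective z.

Lemma subr_inj_neq0 a b : a != b -> z a - z b != 0.
Proof. by move=> ab; rewrite subr_eq0 (inj_eq z_inj). Qed.

Lemma inj_setD1_neq P a q : q \in P :\ a -> z a != z q.
Proof. by rewrite !inE (inj_eq z_inj) eq_sym => /andP[]. Qed.

Lemma hl_coef_setD1 P a r : a \in P -> r != a ->
  hl_coef z P r = (t - (1 - t) * z r / (z a - z r)) * hl_coef z (P :\ a) r.
Proof.
move=> aP ra; have ar : a != r by rewrite eq_sym.
rewrite /hl_coef (big_setD1 a) ?inE ?ar //; congr (_ * _).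
  by rewrite /hl_ratio; field; rewrite !subr_inj_neq0.
by rewrite setDDl setUC -setDDl.
Qed.

Lemma prod_hl_partial_fraction P X : (forall q, q \in P -> X != z q) ->
  \prod_(q in P) ((X - t * z q) / (X - z q)) =
  1 + (1 - t) * \sum_(r in P) z r * hl_coef z P r / (X - z r).
Proof.
move: P X; apply: setD1_ind => [|P a aP /(_ a aP) IH] X XP.
  by rewrite !big_set0 mulr0 addr0.
have XP' q : q \in P :\ a -> X != z q by rewrite inE => /andP[_ /XP].
have Xa_neq0 : X - z a != 0 by rewrite subr_eq0 XP.
set S := \sum_(r in P :\ a) z r * hl_coef z (P :\ a) r / (X - z r).
set Sa := \sum_(r in P :\ a) z r * hl_coef z (P :\ a) r / (z a - z r).
have coef_a : hl_coef z P a = 1 + (1 - t) * Sa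
  by rewrite /hl_coef -IH //; apply: inj_setD1_neq.
have coef_rest : \sum_(r in P :\ a) z r * hl_coef z P r / (X - z r) =
    (X - t * z a) / (X - z a) * S - (1 - t) * z a / (X - z a) * Sa.
  rewrite /S /Sa !mulr_sumr -sumrB; apply: eq_bigr => r; rewrite !inE => /andP[ra rP].
  have /subr_inj_neq0 ar_neq0 : a != r by rewrite eq_sym.
  have Xr_neq0 : X - z r != 0 by rewrite subr_eq0 XP.
  by rewrite (hl_coef_setD1 aP ra); field; rewrite ar_neq0 Xr_neq0 Xa_neq0.
rewrite (big_setD1 a aP) /= IH // (big_setD1 a aP) /= coef_rest coef_a.
by rewrite -/S; field; rewrite Xa_neq0.
Qed.

Lemma sum_hl_coef P : \sum_(r in P) hl_coef z P r = \sum_(j < #|P|) t ^+ j.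
Proof.
move: P; apply: setD1_ind => [|P a aP /(_ a aP) IH].
  by rewrite big_set0 cards0 big_ord0.
set Sa := \sum_(r in P :\ a) z r * hl_coef z (P :\ a) r / (z a - z r).
have coef_a : hl_coef z P a = 1 + (1 - t) * Sa
  by rewrite /hl_coef -prod_hl_partial_fraction //; apply: inj_setD1_neq.
have coef_rest : \sum_(r in P :\ a) hl_coef z P r =
    t * \sum_(r in P :\ a) hl_coef z (P :\ a) r - (1 - t) * Sa.
  rewrite /Sa !mulr_sumr -sumrB; apply: eq_bigr => r; rewrite !inE => /andP[ra _].
  have /subr_inj_neq0 ar_neq0 : a != r by rewrite eq_sym.
  by rewrite (hl_coef_setD1 aP ra); field; rewrite ar_neq0.
rewrite (big_setD1 a aP) /= coef_rest coef_a IH (cardsD1 a P) aP big_ord_recl.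
under [X in _ = _ + X]eq_bigr do rewrite exprS.
by rewrite -mulr_sumr; ring.
Qed.

End HallLittlewoodRatios.

Lemma perm_on_mul_tpermE (T : finType) (P : {set T}) p r (s : {perm T}) :
  p \in P -> r \in P ->
  perm_on P (s * tperm p r)%g && ((s * tperm p r)%g p == r) = perm_on (P :\ p) s.
Proof.
move=> pP rP; apply/andP/idP => [[sP /eqP spr]|sP'].
  have sE y : s y = tperm p r ((s * tperm p r)%g y) by rewrite permM tpermK.
  apply/subsetP => x; rewrite !inE; apply: contraR; rewrite negb_and negbK.
  case: eqP => [-> _|_ /= xP]; first by rewrite sE spr tpermR.
  have [xp xr] : x != p /\ x != r by split; apply: contraNneq xP => ->.
  by rewrite sE (out_perm sP xP) tpermD // eq_sym.
have sp : s p = p by apply: (out_perm sP'); rewrite !inE eqxx.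
rewrite permM sp tpermL eqxx; split => //; apply: perm_onM.
  by apply: subset_trans sP' (subD1set P p).
by apply: subset_trans (tperm_on p r) _; apply/subsetP => x; rewrite !inE => /orP[] /eqP->.
Qed.

Lemma permute_varsM (F : fieldType) n (s u : 'S_n) (y : 'I_n -> F) :
  permute_vars (s * u)%g y = permute_vars s (permute_vars u y).
Proof. by apply: functional_extensionality => i; rewrite /permute_vars permM. Qed.

Lemma vmS (F : fieldType) m (t : F) : vm m.+1 t = vm m t * \sum_(j < m.+1) t ^+ j.
Proof. by rewrite /vm big_nat_recr. Qed.

Section HallLittlewoodSymmetrization.
Variables (F : fieldType) (n : nat) (t : F).
Implicit Types (z : 'I_n -> F) (P : {set 'I_n}) (s : 'S_n).

Definition hl_prod z P := \prod_(i in P) \prod_(j in P | (i < j)%N) hl_ratio t z i j.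

Lemma hl_prod_tperm z P p r s : p \in P -> r \in P ->
    (forall j, j \in P -> p <= j)%N -> perm_on (P :\ p) s ->
  hl_prod (permute_vars (s * tperm p r)%g z) P =
  hl_coef t z P r * hl_prod (permute_vars s (permute_vars (tperm p r) z)) (P :\ p).
Proof.
move=> pP rP p_min s_on; set w := (s * tperm p r)%g.
have /andP[w_on /eqP wp] : perm_on P w && (w p == r) by rewrite perm_on_mul_tpermE.
rewrite /hl_prod (big_setD1 p pP) /=; congr (_ * _).
  rewrite /hl_coef [RHS](reindex_inj (@perm_inj _ w)); apply: eq_big => [j|j _].
    rewrite !inE (perm_closed _ w_on) -wp (inj_eq (@perm_inj _ w)).
    by case jP: (j \in P); rewrite ?andbF //= ltn_neqAle p_min // !andbT eq_sym.
  by rewrite /hl_ratio /permute_vars wp.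
apply: eq_bigr => i; rewrite !inE => /andP[ip iP]; apply: eq_big => [j|j _].
  rewrite !inE; case: eqP => [->|_] //=.
  by rewrite ltnNge p_min ?andbF.
by rewrite /hl_ratio /permute_vars !permM.
Qed.

Lemma sum_hl_prod z P : injective z ->
  \sum_(s | perm_on P s) hl_prod (permute_vars s z) P = vm #|P| t.
Proof.
move: P z; apply: setD1_ind => [|P a aP IH] z z_inj.
  rewrite (big_pred1 1%g) => [|s]; last first.
    apply/idP/eqP => [s_on|->]; last exact: perm_on1.
    by apply: (perm_on_id s_on); rewrite cards0.
  by rewrite /hl_prod big_set0 cards0 /vm big_geq.
have [p pP p_min] := @arg_minnP _ a (fun i => i \in P) (fun i : 'I_n => val i) aP.
rewrite (partition_big (fun s => s p) (mem P)) => [|s s_on]; last by rewrite inE perm_closed.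
transitivity (\sum_(r in P) hl_coef t z P r * vm #|P :\ p| t).
  apply: eq_bigr => r rP; rewrite (reindex_inj (mulIg (tperm p r))) /=.
  rewrite (eq_bigl (perm_on (P :\ p))) => [|s]; last exact: perm_on_mul_tpermE.
  have zt_inj : injective (permute_vars (tperm p r) z) by move=> x y /z_inj /perm_inj.
  rewrite -(IH p pP _ zt_inj) mulr_sumr; apply: eq_bigr => s s_on.
  exact: hl_prod_tperm.
by rewrite -mulr_suml sum_hl_coef // (cardsD1 p P) pP add1n vmS mulrC.
Qed.

End HallLittlewoodSymmetrization.

Lemma perm_incr_eq1 n (f : 'S_n) : {homo f : i j / (i < j)%N} -> f = 1%g.
Proof.
move=> f_incr; pose ltI := fun i j : 'I_n => (i < j)%N.
have enum_sorted : sorted ltI (enum 'I_n).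
  by have := iota_ltn_sorted 0 n; rewrite -val_enum_ord sorted_map.
have f_enum : map f (enum 'I_n) = enum 'I_n.
  apply: (@irr_sorted_eq _ ltI) => [a b c|a|||x]; rewrite /ltI.
  - exact: ltn_trans.
  - exact: ltnn.
  - exact: homo_sorted enum_sorted.
  - exact: enum_sorted.
  - by rewrite mem_enum; apply: perm_onto.
apply/permP => i; have := congr1 (fun s => nth i s i) f_enum.
by rewrite perm1 (nth_map i) ?size_enum_ord // nth_ord_enum.
Qed.

Definition perm_weight n (v : 'S_n) : nat := (\sum_(x : 'I_n) x * v x)%N.

Lemma perm_weight_tperm n (v : 'S_n) (i j : 'I_n) : i != j ->
  (perm_weight (tperm i j * v)%g + i * v i + j * v j = perm_weight v + i * v j + j * v i)%N.
Proof.
move=> ij; pose rest (f : 'I_n -> nat) := (\sum_(x | (x != i) && (x != j)) f x)%N.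
have split_ij f : (\sum_x f x = f i + f j + rest f)%N.
  by rewrite (bigD1 i) //= (bigD1 j) 1?eq_sym //= addnA.
rewrite /perm_weight !split_ij !permM tpermL tpermR.
have -> : rest (fun x => x * (tperm i j * v)%g x)%N = rest (fun x => x * v x)%N.
  by apply: eq_bigr => x /andP[xi xj]; rewrite permM tpermD // eq_sym.
set R := rest _; lia.
Qed.

Section TailCosets.
Variables (n k : nat).
Implicit Types (s r u w : 'S_n) (i : 'I_n).

Definition tail_set : {set 'I_n} := [set i : 'I_n | k <= i]%N.

Definition tail_increasing w : bool :=
  [forall i : 'I_n, forall j : 'I_n, ((k <= i)%N && (i < j)%N) ==> (w i < w j)%N].

Lemma tail_increasingP w :
  reflect (forall i j : 'I_n, k <= i -> i < j -> w i < w j)%N (tail_increasing w).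
Proof.
apply: (iffP forallP) => [incr i j ki ij | incr i].
  by have /forallP/(_ j)/implyP := incr i; apply; rewrite ki.
by apply/forallP => j; apply/implyP => /andP[]; apply: incr.
Qed.

Lemma card_tail_set : #|tail_set| = (n - k)%N.
Proof.
rewrite -sum1_card (eq_bigl (fun i : 'I_n => true && (k <= i)%N)) => [|i]; last by rewrite inE.
by rewrite -(big_geq_mkord k n xpredT (fun _ => 1%N)) sum_nat_const_nat muln1.
Qed.

Lemma perm_on_tail_head s i : perm_on tail_set s -> (i < k)%N -> s i = i.
Proof. by move=> s_on ik; apply: (out_perm s_on); rewrite inE -ltnNge. Qed.

Lemma perm_on_tail_closed s i : perm_on tail_set s -> (k <= s i)%N = (k <= i)%N.
Proof. by move=> s_on; have := perm_closed i s_on; rewrite !inE. Qed.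

Lemma tail_increasing_perm_on_eq1 r u : perm_on tail_set r ->
  tail_increasing u -> tail_increasing (r * u) -> r = 1%g.
Proof.
move=> r_on /tail_increasingP u_incr /tail_increasingP ru_incr.
apply: perm_incr_eq1 => i j ij; have [ki|ik] := leqP k i; last first.
  rewrite (perm_on_tail_head r_on ik); have [kj|jk] := leqP k j.
    by rewrite (leq_trans ik) // perm_on_tail_closed.
  by rewrite (perm_on_tail_head r_on jk).
have kj : (k <= j)%N := leq_trans ki (ltnW ij).
have := ru_incr _ _ ki ij; rewrite !permM => u_rij.
case: (ltngtP (r i) (r j)) => [//|rji|/val_inj/perm_inj eij]; last by rewrite eij ltnn in ij.
have := u_incr _ _ _ rji; rewrite perm_on_tail_closed // => /(_ kj) /(ltn_trans u_rij).
by rewrite ltnn.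
Qed.

Lemma tail_coset_uniq s s' u u' : perm_on tail_set s -> perm_on tail_set s' ->
  tail_increasing u -> tail_increasing u' -> (s * u = s' * u')%g -> u = u'.
Proof.
move=> s_on s'_on u_incr u'_incr suE.
have u'E : u' = (s'^-1 * s * u)%g by rewrite -mulgA suE mulKg.
have r_on : perm_on tail_set (s'^-1 * s)%g by rewrite perm_onM ?perm_onV.
by rewrite u'E (tail_increasing_perm_on_eq1 r_on u_incr) ?mul1g // -u'E.
Qed.

(* Maximizing [perm_weight (r * w)] over the subgroup makes [r * w] increasing on
   the tail: swapping an inversion there strictly increases the weight. *)
Lemma tail_coset_exists w :
  exists2 u, tail_increasing u & exists2 s, perm_on tail_set s & w = (s * u)%g.
Proof.
have [r r_on r_max] := @arg_maxnP _ 1%g (perm_on tail_set)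
  (fun r => perm_weight (r * w)%g) (perm_on1 _).
exists (r * w)%g; last by exists r^-1%g; rewrite ?perm_onV ?mulKg.
apply/tail_increasingP => i j ki ij; rewrite ltnNge; apply/negP => uji.
have ij_neq : i != j by rewrite neq_ltn ij.
have {}uji : ((r * w)%g j < (r * w)%g i)%N.
  by rewrite ltn_neqAle uji andbT val_eqE (inj_eq perm_inj) eq_sym.
have t_on : perm_on tail_set (tperm i j).
  apply: subset_trans (tperm_on i j) _; apply/subsetP => x.
  by rewrite !inE => /orP[] /eqP->; rewrite ?(leq_trans ki (ltnW ij)).
have := r_max _ (perm_onM t_on r_on); rewrite -mulgA.
have := perm_weight_tperm (r * w)%g ij_neq.
move: uji ij; set a := perm_weight _; set b := perm_weight _.
set ui := nat_of_ord _; set uj := nat_of_ord _; nia.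
Qed.

Lemma sum_tail_cosets (R : nmodType) (A : 'S_n -> R) :
  \sum_(w : 'S_n) A w = \sum_(u | tail_increasing u) \sum_(s | perm_on tail_set s) A (s * u)%g.
Proof.
pose coset u := [set (s * u)%g | s in [set s | perm_on tail_set s]].
transitivity (\sum_(u | tail_increasing u) \sum_(w in coset u) A w); last first.
  apply: eq_bigr => u _; rewrite big_imset /= => [|x y _ _ /mulIg //].
  by apply: eq_bigl => s; rewrite inE.
rewrite (exchange_big_dep xpredT) //=; apply: eq_bigr => w _.
have [u0 u0_incr [s0 s0_on ->]] := tail_coset_exists w.
rewrite (big_pred1 u0) // => u /=; apply/andP/eqP => [[u_incr /imsetP[s]]|->].
  by rewrite inE => s_on /(tail_coset_uniq s0_on s_on u0_incr u_incr).
by split; last by apply/imsetP; exists s0; rewrite ?inE.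
Qed.

End TailCosets.

Section HeadTailPairs.
Variables (R : comPzSemiRingType) (n k : nat).
Implicit Types (X : 'I_n -> 'I_n -> R) (s : 'S_n).

Definition head_pairs_prod X : R :=
  \prod_(i : 'I_n | (i < k)%N) \prod_(j : 'I_n | (i < j)%N) X i j.

Lemma prod_pairs_head_tail X :
  \prod_(i : 'I_n) \prod_(j : 'I_n | (i < j)%N) X i j =
  head_pairs_prod X * \prod_(i in tail_set n k) \prod_(j in tail_set n k | (i < j)%N) X i j.
Proof.
rewrite (bigID (fun i : 'I_n => (i < k)%N)) /=; congr (_ * _).
apply: eq_big => [i|i]; first by rewrite inE -leqNgt.
rewrite -leqNgt => ki; apply: eq_bigl => j; rewrite inE andbC.
by case: ltnP => // ij; rewrite (leq_trans ki (ltnW ij)).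
Qed.

Lemma head_pairs_prod_perm_on_tail X s : perm_on (tail_set n k) s ->
  head_pairs_prod (fun i j => X (s i) (s j)) = head_pairs_prod X.
Proof.
move=> s_on; apply: eq_bigr => i ik; rewrite (perm_on_tail_head s_on ik).
rewrite [RHS](reindex_inj (@perm_inj _ s)); apply: eq_bigl => j.
have [kj|jk] := leqP k j; last by rewrite (perm_on_tail_head s_on jk).
by rewrite !(leq_trans ik) ?perm_on_tail_closed.
Qed.

End HeadTailPairs.

Lemma vm1 (F : fieldType) (t : F) : vm 1 t = 1.
Proof. by rewrite /vm big_nat1 big_ord1 expr0. Qed.

Lemma vlam_strict_pad (F : fieldType) (nu : seq nat) m (t : F) :
  sorted (fun a b => b < a)%N nu -> all (fun a => 0 < a)%N nu ->
  vlam (nu ++ nseq m 0%N) t = vm m t.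
Proof.
move=> nu_sorted nu_pos; set s := nu ++ _.
have nu_uniq : uniq nu.
  by apply: sorted_uniq nu_sorted => [a b c /= ba cb|a]; [apply: ltn_trans cb ba | apply: ltnn].
have nu0 : (0%N \in nu) = false by apply/negbTE/negP => /(allP nu_pos); rewrite ltnn.
have count_s c : count_mem c s = if c == 0%N then m else (c \in nu) : nat.
  rewrite count_cat count_uniq_mem // count_nseq /= eq_sym.
  by case: eqP => [->|_]; rewrite ?nu0 ?mul1n ?mul0n ?addn0.
rewrite /vlam (bigID (pred1 0%N)) /= [X in _ * X]big1_seq ?mulr1 => [|c /andP[c0]]; last first.
  rewrite mem_undup mem_cat mem_nseq (negbTE c0) andbF orbF => c_nu.
  by rewrite count_s (negbTE c0) c_nu vm1.
case: m @s count_s => [|m] s count_s.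
  rewrite big1_seq => [|c /andP[/eqP-> _]]; first by rewrite /vm big_geq.
  by rewrite count_s /vm big_geq.
rewrite -big_filter filter_pred1_uniq ?undup_uniq ?big_seq1 ?count_s //.
by rewrite mem_undup mem_cat mem_nseq orbT.
Qed.

Section PartialFlagIntegrand.
Variables (F : fieldType) (n : nat) (nu : seq nat) (t : F).
Implicit Types (z : 'I_n -> F) (s : 'S_n).

Definition partial_flag_integrand z : F :=
  (\prod_(i : 'I_n | (i < size nu)%N) z i ^+ nth 0%N nu i) *
  head_pairs_prod (size nu) (fun i j => z i - t * z j).

Definition head_vandermonde z : F := head_pairs_prod (size nu) (fun i j => z i - z j).

Lemma full_integrand_factor z :
  ((\prod_(i : 'I_n) z i ^+ nth 0%N (nu ++ nseq (n - size nu) 0%N) i) *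
    \prod_(i : 'I_n) \prod_(j : 'I_n | (i < j)%N) (z i - t * z j)) /
   \prod_(i : 'I_n) \prod_(j : 'I_n | (i < j)%N) (z i - z j) =
  partial_flag_integrand z / head_vandermonde z * hl_prod t z (tail_set n (size nu)).
Proof.
have -> : \prod_(i : 'I_n) z i ^+ nth 0%N (nu ++ nseq (n - size nu) 0%N) i =
          \prod_(i : 'I_n | (i < size nu)%N) z i ^+ nth 0%N nu i.
  rewrite (bigID (fun i : 'I_n => (i < size nu)%N)) /= [X in _ * X]big1 ?mulr1 => [|i].
    by apply: eq_bigr => i i_nu; rewrite nth_cat i_nu.
  by rewrite -leqNgt nth_cat ltnNge => ->; rewrite nth_nseq if_same expr0.
rewrite !(prod_pairs_head_tail (size nu)) /hl_prod /hl_ratio.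
under [X in _ = _ * X]eq_bigr do rewrite prodf_div.
by rewrite prodf_div mulf_div mulrA.
Qed.

Lemma partial_flag_ratio_perm_on_tail z s : perm_on (tail_set n (size nu)) s ->
  partial_flag_integrand (permute_vars s z) / head_vandermonde (permute_vars s z) =
  partial_flag_integrand z / head_vandermonde z.
Proof.
move=> s_on; rewrite /partial_flag_integrand /head_vandermonde /permute_vars.
rewrite !(head_pairs_prod_perm_on_tail (fun a b => z a - _ * z b)) //.
rewrite !(head_pairs_prod_perm_on_tail (fun a b => z a - z b)) //.
by congr (_ * _ / _); apply: eq_bigr => i i_nu; rewrite (perm_on_tail_head s_on).
Qed.

End PartialFlagIntegrand.

Theorem mainTheorem4 (F : fieldType) (n : nat) (nu : seq nat) (t : F)
  (y : 'I_n -> F) :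
  injective y ->
  sorted (fun a b => (b < a)%N) nu ->
  all (fun a => (0 < a)%N) nu ->
  (size nu <= n)%N ->
  vlam (nu ++ nseq (n - size nu) 0%N) t != 0 ->
  Plam (nu ++ nseq (n - size nu) 0%N) t y =
  pushPartial (size nu)
    (fun x : 'I_n -> F =>
       (\prod_(i : 'I_n | (i < size nu)%N) x i ^+ nth 0%N nu i) *
       \prod_(i : 'I_n | (i < size nu)%N) \prod_(j : 'I_n | (i < j)%N)
          (x i - t * x j)) y.
Proof.
move=> y_inj nu_sorted nu_pos _; rewrite /Plam vlam_strict_pad // => vm_neq0.
apply: (canLR (mulfK vm_neq0)); rewrite mulrC.
rewrite /Rlam /pushFull /pushPartial (sum_tail_cosets (size nu)) mulr_sumr.
apply: eq_bigr => u _; set zu := permute_vars u y.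
have zu_inj : injective zu by move=> a b /y_inj /perm_inj.
have -> : vm (n - size nu) t = \sum_(s | perm_on (tail_set n (size nu)) s)
    hl_prod t (permute_vars s zu) (tail_set n (size nu)).
  by rewrite sum_hl_prod // card_tail_set.
rewrite mulr_suml; apply: eq_bigr => s s_on /=.
by rewrite permute_varsM full_integrand_factor partial_flag_ratio_perm_on_tail // mulrC.
Qed.
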